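(* Let $c\in\mathbb{C}(t)\setminus\{0,1,t\}$ and $F_n$, $P_1$, $d$ as in the context. For every sufficiently small $\epsilon>0$ there exist $\delta>0$ and an integer $N>0$ such that $$\frac{1}{\deg F_n}\log\|F_n(1,t)\|-\frac{\log|P_1(1,0)|}{d}>-\epsilon$$ for all $t\in\mathbb{C}$ with $|t|<\delta$ and all $n\ge N$.
   Context: $F_{t_1,t_2}(z,w)=\big((t_1w^2-t_2z^2)^2,\;4t_2zw(w-z)(t_1w-t_2z)\big)$. $C=(c_1,c_2)$ is a pair of coprime homogeneous polynomials in $(t_1,t_2)$ of equal degree with $c(t)=c_1(t,1)/c_2(t,1)$. $F_1=F_{t_1,t_2}(C)/\gcd(F_{t_1,t_2}(C))=(P_1,Q_1)$, $d=\deg F_1$, $F_{n+1}=F_{t_1,t_2}(F_n)/t_2^2$, so $\deg F_n=4^{n-1}d$. $\|(z,w)\|=\max\{|z|,|w|\}$. *)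

From mathcomp Require Import all_boot all_algebra.
From mathcomp.real_closed Require Import complex.
From mathcomp Require Import mpoly.
From mathcomp Require Import reals exp.

Set Implicit Arguments.
Unset Strict Implicit.
Unset Printing Implicit Defensive.

Import GRing.Theory Num.Theory.
Local Open Scope ring_scope.

(* Homogeneous-coordinate polynomials in (t1, t2) = ('X_0, 'X_1) over C = R[i]. *)
Notation bpoly R := {mpoly (R[i])[2]}.

Definition t1 {R : realType} : bpoly R := 'X_(@Ordinal 2 0 isT).
Definition t2 {R : realType} : bpoly R := 'X_(@Ordinal 2 1 isT).

Definition Fmap {R : realType} (zw : bpoly R * bpoly R) : bpoly R * bpoly R :=
  let: (z, w) := zw in
  ((t1 * w ^+ 2 - t2 * z ^+ 2) ^+ 2,
   4%:R * t2 * z * w * (w - z) * (t1 * w - t2 * z)).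

Definition bdvd {R : realType} (a b : bpoly R) : Prop := exists c, b = c * a.

Definition is_gcd {R : realType} (g a b : bpoly R) : Prop :=
  [/\ bdvd g a, bdvd g b & forall h, bdvd h a -> bdvd h b -> bdvd h g].

Definition bcoprime {R : realType} (a b : bpoly R) : Prop := is_gcd 1 a b.

Definition pdeg {R : realType} (F : bpoly R * bpoly R) : nat :=
  (maxn (msize F.1) (msize F.2)).-1.

Definition ev {R : realType} (a b : R[i]) (p : bpoly R) : R[i] :=
  p.@[fun i : 'I_2 => if val i == 0%N then a else b].

Definition cabs {R : realType} (x : R[i]) : R := ComplexField.Normc.normc x.

Definition pnorm {R : realType} (z w : R[i]) : R := Num.max (cabs z) (cabs w).

From mathcomp Require Import all_boot all_algebra.
From mathcomp.real_closed Require Import complex.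
From mathcomp Require Import mpoly.
From mathcomp Require Import reals exp.
From mathcomp Require Import all_order.
From mathcomp Require Import zify ring lra.

Import Order.TTheory GRing.Theory Num.Theory.
Local Open Scope ring_scope.

(* At [(t1, t2) = (1, 0)] everything is explicit: by homogeneity [Q_n(1, 0) = 0]
   and [P_{n+1}(1, 0) = P_n(1, 0)^4], while [P_1(1, 0) <> 0] since otherwise [t2]
   would divide both [P_1] and [Q_1], against the choice of the gcd.  Hence
   [ln |F_n(1, 0)| / deg F_n = ln |P_1(1, 0)| / d] for every [n].
   For [0 < |t| <= 1/8] the normalised step [(z, w) |-> F_{1,t}(z, w) / t^2] at
   least raises the norm to the fourth power up to a factor [4], so
   [ln ||F_{N+j}(1, t)|| >= 4^j (ln ||F_N(1, t)|| - ln 4 / 3)].  Choosing [N] large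
   and then [|t|] so small that [|P_N(1, t)| >= |P_N(1, 0)| / 2], the loss is a
   constant divided by [deg F_N = 4^(N-1) d], hence below [eps]. *)

Section HomogeneousFactors.
Context {n : nat} {K : idomainType}.
Implicit Types p q : {mpoly K[n]}.

Local Notation ph i p := (pihomog mdeg i p).

Lemma pihomogM k b p q : (msize p <= b)%N -> (msize q <= b)%N ->
  ph k (p * q) = \sum_(i < b) \sum_(j < b | (i + j == k)%N) ph i p * ph j q.
Proof.
move=> hp hq.
rewrite {1}(pihomog_partitionE hp) {1}(pihomog_partitionE hq) mulr_suml raddf_sum /=.
apply: eq_bigr => i _; rewrite mulr_sumr raddf_sum [RHS]big_mkcond /=.
apply: eq_bigr => j _.
have hij : ph i p * ph j q \is (i + j)%N.-homog by apply: dhomogM; apply: pihomogP.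
by case: eqP => [<-|/eqP ne]; [rewrite pihomog_dE | rewrite (pihomog_ne0 ne hij)].
Qed.

Lemma pihomogM_single k b i0 j0 p q : (msize p <= b)%N -> (msize q <= b)%N ->
  (i0 < b)%N -> (j0 < b)%N -> (i0 + j0)%N = k ->
  (forall i j, (i < b)%N -> (j < b)%N -> (i + j)%N = k ->
     ph i p != 0 -> ph j q != 0 -> i = i0) ->
  ph k (p * q) = ph i0 p * ph j0 q.
Proof.
move=> hp hq hi0 hj0 hk uniq_ij.
rewrite (pihomogM k b p q hp hq) (bigD1 (Ordinal hi0)) //= (bigD1 (Ordinal hj0)) /=;
  last by rewrite hk.
rewrite big1 ?addr0; last first.
  by move=> j /andP[/eqP ij /eqP[]]; apply: val_inj => /=; lia.
rewrite big1 ?addr0 // => i /eqP ne_i; apply: big1 => j /eqP ij.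
have [->|nz_i] := eqVneq (ph i p) 0; first by rewrite mul0r.
have [->|nz_j] := eqVneq (ph j q) 0; first by rewrite mulr0.
by case: ne_i; apply: val_inj; exact: uniq_ij (ltn_ord i) (ltn_ord j) ij nz_i nz_j.
Qed.

Lemma pihomog_range p b : p != 0 -> (msize p <= b)%N ->
  exists lo hi, [/\ (lo <= hi < b)%N, ph lo p != 0, ph hi p != 0 &
     forall i, (i < b)%N -> ph i p != 0 -> (lo <= i <= hi)%N].
Proof.
move=> nz_p hpb.
have ex_i : exists i, (i < b)%N && (ph i p != 0).
  have /existsP[i nz_i] : [exists i : 'I_b, ph i p != 0].
    apply: contraNT nz_p => /existsPn zero_ph; apply/eqP.
    by rewrite (pihomog_partitionE hpb) big1 // => i _; apply/eqP/negPn.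
  by exists i; rewrite ltn_ord.
have ub : forall i, (i < b)%N && (ph i p != 0) -> (i <= b)%N.
  by move=> i /andP[/ltnW].
case: (ex_minnP ex_i) => lo /andP[_ nz_lo] lo_min.
case: (ex_maxnP ex_i ub) => hi /andP[hib nz_hi] hi_max.
exists lo, hi; split => //; first by rewrite hib andbT lo_min ?hib ?nz_hi.
by move=> i ib nz_i; rewrite lo_min ?hi_max ?ib.
Qed.

(* The lowest and the highest homogeneous components of [p * q] are the
   products of those of [p] and [q]; both have degree [d], so [p] has only one
   nonzero component. *)
Lemma dhomog_factor {p q d} : p * q \is d.-homog -> p * q != 0 ->
  exists e, p \is e.-homog.
Proof.
move=> hpq nz_pq.
have nz_p : p != 0 by apply: contraNneq nz_pq => ->; rewrite mul0r.
have nz_q : q != 0 by apply: contraNneq nz_pq => ->; rewrite mulr0.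
pose b := (msize p + msize q)%N.
have hpb : (msize p <= b)%N by rewrite leq_addr.
have hqb : (msize q <= b)%N by rewrite leq_addl.
have [lp [hp [/andP[lhp hpb'] nz_lp nz_hp rng_p]]] := pihomog_range p b nz_p hpb.
have [lq [hq [/andP[lhq hqb'] nz_lq nz_hq rng_q]]] := pihomog_range q b nz_q hqb.
have deg_d i j : (i < b)%N -> (j < b)%N ->
    (forall i' j', (i' < b)%N -> (j' < b)%N -> (i' + j' = i + j)%N ->
       ph i' p != 0 -> ph j' q != 0 -> i' = i) ->
    ph i p != 0 -> ph j q != 0 -> (i + j)%N = d.
  move=> ib jb uniq_ij nz_i nz_j; apply/eqP; apply: contraTT (mulf_neq0 nz_i nz_j).
  rewrite negbK -(pihomogM_single (i + j) b i j p q hpb hqb ib jb erefl uniq_ij) => ne.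
  by rewrite (pihomog_ne0 _ hpq) // eq_sym.
have lo_d : (lp + lq)%N = d.
  apply: deg_d => //; try lia.
  move=> i j ib jb ij /(rng_p i ib) ? /(rng_q j jb) ?; lia.
have hi_d : (hp + hq)%N = d.
  apply: deg_d => // i j ib jb ij /(rng_p i ib) ? /(rng_q j jb) ?; lia.
have lp_hp : lp = hp by lia.
exists lp; rewrite homog_piE; apply/eqP.
rewrite [RHS](pihomog_partitionE hpb) (bigD1 (Ordinal (leq_ltn_trans lhp hpb'))) //=.
rewrite big1 ?addr0 // => i /eqP ne_i; apply/eqP/negPn/negP => nz_i; case: ne_i.
have := rng_p i (ltn_ord i) nz_i => lpi.
by apply: val_inj => /=; lia.
Qed.

Lemma dhomog_factors {p q d} :
  p * q \is d.-homog -> p * q != 0 ->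
  exists e1 e2, [/\ p \is e1.-homog, q \is e2.-homog & (e1 + e2)%N = d].
Proof.
move=> hpq nz_pq.
have [e1 hp] := dhomog_factor hpq nz_pq.
have [e2 hq] : exists e, q \is e.-homog.
  by apply: (dhomog_factor (p := q) (q := p) (d := d)); rewrite mulrC.
by exists e1, e2; split => //; exact: dhomog_uniq nz_pq (dhomogM hp hq) hpq.
Qed.

Lemma dhomog_cofactors {A B g p q d} : A \is d.-homog -> B \is d.-homog -> B != 0 ->
  A = g * p -> B = g * q -> exists e, p \is e.-homog /\ q \is e.-homog.
Proof.
move=> hA hB nz_B def_A def_B; move: hB nz_B; rewrite def_B => hB nz_gq.
have [eg [e [hg hq de]]] := dhomog_factors hB nz_gq.
exists e; split => //; have [->|nz_p] := eqVneq p 0; first exact: dhomog0.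
have nz_g : g != 0 by apply: contraNneq nz_gq => ->; rewrite mul0r.
move: hA; rewrite def_A => hA.
have [eg' [e' [hg' hp de']]] := dhomog_factors hA (mulf_neq0 nz_g nz_p).
have eg_eg' := dhomog_uniq nz_g hg hg'; rewrite (_ : e = e') //; lia.
Qed.
End HomogeneousFactors.

Section TwoVariables.
Context {R : realType}.
Implicit Types (p q : bpoly R) (a b : R[i]).
Local Notation i0 := (@Ordinal 2 0 isT).
Local Notation i1 := (@Ordinal 2 1 isT).

Lemma mdeg2 (m : 'X_{1..2}) : mdeg m = (m i0 + m i1)%N.
Proof.
rewrite mdegE big_ord_recr big_ord_recr big_ord0 /=.
by congr (_ + m _ + m _)%N; apply: val_inj.
Qed.

Lemma evE a b p : ev a b p = \sum_(m <- msupp p) p@_m * (a ^+ m i0 * b ^+ m i1).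
Proof.
rewrite /ev mevalE; apply: eq_bigr => m _.
rewrite big_ord_recr big_ord_recr big_ord0 /= mul1r.
by congr (_ * (_ ^+ _ * _ ^+ _)); congr (m _); apply: val_inj.
Qed.

Lemma ev_t1 a b : ev a b t1 = a. Proof. exact: mevalXU. Qed.
Lemma ev_t2 a b : ev a b t2 = b. Proof. exact: mevalXU. Qed.
Lemma ev_nat a b k : ev a b k%:R = k%:R.
Proof. by rewrite -mpolyC_nat /ev mevalC. Qed.
Lemma evM a b p q : ev a b (p * q) = ev a b p * ev a b q. Proof. exact: mevalM. Qed.
Lemma evB a b p q : ev a b (p - q) = ev a b p - ev a b q. Proof. exact: mevalB. Qed.
Lemma evXn a b p k : ev a b (p ^+ k) = ev a b p ^+ k. Proof. exact: rmorphXn. Qed.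

Lemma mnm2_axisE (m : 'X_{1..2}) : (m == U_(i0) *+ mdeg m)%MM = (m i1 == 0%N).
Proof.
apply/eqP/eqP => [->|m_i1]; first by rewrite mulmnE mnm1E.
apply/mnmP => i; rewrite mulmnE mnm1E mdeg2 m_i1 addn0.
case: i => [[|[|j]] ji] //=.
  by rewrite mul1n (_ : Ordinal ji = i0) //; apply: val_inj.
by rewrite mul0n (_ : Ordinal ji = i1) //; apply: val_inj.
Qed.

Lemma ev10_dhomog {p k} : p \is k.-homog -> ev 1 0 p = p@_(U_(i0) *+ k)%MM.
Proof.
move=> hp; rewrite evE [in RHS](mpolyE p) raddf_sum /=.
apply: eq_big_seq => m hm; rewrite mcoeffZ mcoeffX expr1n mul1r expr0n.
by rewrite -(dhomog_mf hp hm) mnm2_axisE.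
Qed.

Lemma t2_dvd_dhomog {p k} : p \is k.-homog -> ev 1 0 p = 0 -> exists q, p = t2 * q.
Proof.
move=> hp p10.
have pos_i1 m : m \in msupp p -> (0 < m i1)%N.
  move=> hm; rewrite lt0n; apply: contraTneq (hm) => /eqP.
  rewrite -mnm2_axisE (dhomog_mf hp hm) => /eqP ->.
  by rewrite mcoeff_msupp negbK -(ev10_dhomog hp) p10.
exists (\sum_(m <- msupp p) p@_m *: 'X_[m - U_(i1)]).
rewrite mulr_sumr {1}(mpolyE p) !big_seq; apply: eq_bigr => m hm.
rewrite -scalerAr /t2 -mpolyXD; congr (_ *: 'X_[_]).
apply/mnmP => i; rewrite mnmDE mnmBE mnm1E.
by case: eqP => [<-|_]; rewrite ?subn0 // subnKC ?pos_i1.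
Qed.
End TwoVariables.

Section FmapAlgebra.
Context {R : realType}.
Implicit Types (c P Q X : bpoly R).

Lemma t1_dhomog : (t1 : bpoly R) \is 1.-homog.
Proof. by rewrite dhomogX; apply/eqP; apply: mdeg1. Qed.

Lemma t2_dhomog : (t2 : bpoly R) \is 1.-homog.
Proof. by rewrite dhomogX; apply/eqP; apply: mdeg1. Qed.

Lemma t2_neq0 : (t2 : bpoly R) != 0.
Proof.
apply: contra_neq (@oner_neq0 R[i]) => t2_0.
by rewrite -(ev_t2 0 1) t2_0 /ev meval0.
Qed.

Lemma mulr_t2_neq1 c : c * t2 != 1.
Proof.
apply/eqP => /(congr1 (ev 1 0)); rewrite evM ev_t2 mulr0 /ev meval1.
by move/eqP; rewrite eq_sym oner_eq0.
Qed.

Lemma msize_dhomog {P e} : P \is e.-homog -> P != 0 -> msize P = e.+1.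
Proof.
move=> hP nz_P; have := dhomog_uniq nz_P hP (dhomog_msize hP).
by move=> ->; rewrite prednK // lt0n msize_poly_eq0.
Qed.

Lemma pdeg_dhomog {P Q e} : P \is e.-homog -> Q \is e.-homog -> P != 0 ->
  pdeg (P, Q) = e.
Proof.
move=> hP hQ nz_P; rewrite /pdeg /= (msize_dhomog hP nz_P).
have [->|nz_Q] := eqVneq Q 0; first by rewrite msize0 maxn0.
by rewrite (msize_dhomog hQ nz_Q) maxnn.
Qed.

Lemma Fmap_dhomog {P Q D} : P \is D.-homog -> Q \is D.-homog ->
  (Fmap (P, Q)).1 \is (4 * D + 2).-homog /\ (Fmap (P, Q)).2 \is (4 * D + 2).-homog.
Proof.
move=> hP hQ; have h1 := t1_dhomog; have h2 := t2_dhomog; split.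
  have hA : t1 * Q ^+ 2 - t2 * P ^+ 2 \is (1 + D * 2).-homog.
    by rewrite rpredB // dhomogM // dhomogMn.
  by have := dhomogMn 2 hA; rewrite (_ : ((1 + D * 2) * 2 = 4 * D + 2)%N) //; lia.
have h4 : (4%:R : bpoly R) \is 0.-homog by rewrite rpredMn // dhomog1.
have hB : t1 * Q - t2 * P \is (1 + D).-homog by rewrite rpredB // dhomogM.
have := dhomogM (dhomogM (dhomogM (dhomogM (dhomogM h4 h2) hP) hQ) (rpredB hQ hP)) hB.
by rewrite (_ : (0 + 1 + D + D + D + (1 + D) = 4 * D + 2)%N) //; lia.
Qed.

Lemma dhomog_t2sq_cancel {X D} : t2 ^+ 2 * X \is (D + 2).-homog -> X \is D.-homog.
Proof.
have [->|nz_X] := eqVneq X 0; first by rewrite dhomog0.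
move=> hX; have nz_t2sq : (t2 ^+ 2 : bpoly R) != 0 by rewrite expf_neq0 ?t2_neq0.
have [e1 [e2 [h1 h2 e12]]] := dhomog_factors hX (mulf_neq0 nz_t2sq nz_X).
have e1_2 : e1 = (1 * 2)%N := dhomog_uniq nz_t2sq h1 (dhomogMn 2 t2_dhomog).
by rewrite (_ : D = e2) //; lia.
Qed.

Lemma ev10_Fmap1 P Q : ev 1 0 (Fmap (P, Q)).1 = ev 1 0 Q ^+ 4.
Proof. by rewrite /Fmap /= evXn evB !evM ev_t1 ev_t2; ring. Qed.

Lemma Fmap1_t2sq {P Q X D} : Q \is D.-homog -> (Fmap (P, Q)).1 = t2 ^+ 2 * X ->
  ev 1 0 Q = 0 /\ ev 1 0 X = ev 1 0 P ^+ 4.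
Proof.
move=> hQ hX.
have Q10 : ev 1 0 Q = 0.
  have := congr1 (ev 1 0) hX; rewrite ev10_Fmap1 evM evXn ev_t2 expr0n mul0r.
  by move/eqP; rewrite expf_eq0 => /eqP.
split => //; have [Q' def_Q] := t2_dvd_dhomog hQ Q10.
move: hX; rewrite def_Q /Fmap /=.
have -> : (t1 * (t2 * Q') ^+ 2 - t2 * P ^+ 2) ^+ 2 =
          t2 ^+ 2 * (t1 * t2 * Q' ^+ 2 - P ^+ 2) ^+ 2 by ring.
move/(mulfI (expf_neq0 2 t2_neq0)) <-.
by rewrite evXn evB !evM ev_t1 ev_t2; ring.
Qed.

Lemma gcd_cofactor_ev10 {g P Q e1 e2} : g != 0 -> is_gcd g (g * P) (g * Q) ->
  P \is e1.-homog -> Q \is e2.-homog -> ev 1 0 Q = 0 -> ev 1 0 P != 0.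
Proof.
move=> nz_g [_ _ gcd_g] hP hQ Q10; apply/eqP => P10.
have [P' def_P] := t2_dvd_dhomog hP P10; have [Q' def_Q] := t2_dvd_dhomog hQ Q10.
have [c def_g] : bdvd (g * t2) g.
  by apply: gcd_g; [exists P'; rewrite def_P | exists Q'; rewrite def_Q]; ring.
have : g * (1 - c * t2) == 0 by rewrite mulrBr mulr1 {1}def_g; apply/eqP; ring.
by rewrite mulf_eq0 (negbTE nz_g) subr_eq0 eq_sym (negbTE (mulr_t2_neq1 c)).
Qed.

Lemma Fmap2_neq0 {c1 c2 : bpoly R} : c1 != 0 -> c2 != 0 -> c1 != c2 ->
  t2 * c1 != t1 * c2 -> (Fmap (c1, c2)).2 != 0.
Proof.
move=> nz_c1 nz_c2 c12 tc12.
have nz4 : (4%:R : bpoly R) != 0 by rewrite -mpolyC_nat mpolyC_eq0 pnatr_eq0.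
by rewrite /Fmap /= !mulf_neq0 ?t2_neq0 //; rewrite subr_eq0 eq_sym.
Qed.
End FmapAlgebra.

Section RealBounds.
Context {R : realFieldType}.
Implicit Types S a b al g h : R.

Lemma growth_first_dominant {S a b al} : 0 < S -> S <= 1 / 8 -> 0 <= a <= b ->
  b ^+ 2 - S * a ^+ 2 <= al -> b ^+ 4 / 4 * S ^+ 2 <= al ^+ 2.
Proof.
move=> S_gt0 S_small /andP[a_ge0 ab] al_lo.
have b_ge0 := le_trans a_ge0 ab; have b2_ge0 := exprn_ge0 2 b_ge0.
have a2b2 : a ^+ 2 <= b ^+ 2 by rewrite lerXn2r ?nnegrE.
have Sa2 : S * a ^+ 2 <= S * b ^+ 2 := ler_wpM2l (ltW S_gt0) a2b2.
have Sb2 : S * b ^+ 2 <= 1 / 8 * b ^+ 2 := ler_wpM2r b2_ge0 S_small.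
have al_b2 : b ^+ 2 / 2 <= al by lra.
have al2 : (b ^+ 2 / 2) ^+ 2 <= al ^+ 2 by rewrite lerXn2r ?nnegrE //; lra.
have S2 : S ^+ 2 <= 1 by nra.
have b4 := exprn_ge0 4 b_ge0; nra.
Qed.

Lemma growth_first_large {S a al} : 0 <= S -> S * a ^+ 2 / 2 <= al ->
  a ^+ 4 / 4 * S ^+ 2 <= al ^+ 2.
Proof.
move=> S_ge0 al_lo; have a2 := sqr_ge0 a.
have Sa2 : 0 <= S * a ^+ 2 / 2 by nra.
suff -> : a ^+ 4 / 4 * S ^+ 2 = (S * a ^+ 2 / 2) ^+ 2 by rewrite lerXn2r ?nnegrE //; lra.
by field.
Qed.

(* When [|w^2 - s z^2|] is small, [|w|^2] is close to [|s| |z|^2], which forces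
   [2 |s| |z| <= |w| <= |z| / 2]. *)
Lemma growth_second {S a b al g h} : 0 < S -> S <= 1 / 8 -> 0 <= a -> 0 <= b ->
  b ^+ 2 - S * a ^+ 2 <= al -> S * a ^+ 2 - b ^+ 2 <= al -> al < S * a ^+ 2 / 2 ->
  a - b <= g -> b - S * a <= h -> a ^+ 4 / 4 * S ^+ 2 <= 4 * S * a * b * g * h.
Proof.
move=> S_gt0 S_small a_ge0 b_ge0 al_lo al_lo' al_small ag bh.
have b2_lo : S * a ^+ 2 / 2 < b ^+ 2 by lra.
have b2_hi : b ^+ 2 <= a ^+ 2 / 4 by nra.
have b_hi : b <= a / 2 by nra.
have b_lo : 2 * S * a <= b by nra.
have g_lo : a / 2 <= g by lra.
have h_lo : b / 2 <= h by lra.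
have p4 : 0 <= 4 * S * a * b by rewrite !mulr_ge0 // ltW.
have gh : a / 2 * (b / 2) <= g * h by apply: ler_pM => //; lra.
have w_lo := ler_wpM2l p4 gh.
have Sa2 : 0 <= S * a ^+ 2 by rewrite mulr_ge0 // ?sqr_ge0 // ltW.
have b2_Sa2 := ler_wpM2l Sa2 (ltW b2_lo).
have a4 := exprn_ge0 4 a_ge0; have S2 := exprn_ge0 2 (ltW S_gt0).
nra.
Qed.
Lemma affine_recurrence_lower {a : nat -> R} {r L c} : 0 <= r -> r * c - L = c ->
  (forall j, r * a j - L <= a j.+1) -> forall j, r ^+ j * (a 0%N - c) + c <= a j.
Proof.
move=> r_ge0 fix_c a_rec; elim=> [|j IHj]; first by rewrite expr0 mul1r subrK.
apply: le_trans (a_rec j).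
have -> : r ^+ j.+1 * (a 0%N - c) + c = r * (r ^+ j * (a 0%N - c) + c) - L.
  by rewrite -{2}fix_c exprS; ring.
by rewrite lerB // ler_wpM2l.
Qed.

Lemma normalized_lower_bound (a l c eps m K E : R) : 0 < m -> 0 < K -> 1 <= E ->
  0 <= c -> c < eps * K -> m * (K * l - c) <= a -> - eps < a / (m * K * E) - l / E.
Proof.
move=> m_gt0 K_gt0 E_ge1 c_ge0 c_lt a_lo.
have E_gt0 : 0 < E by lra.
have mKE_gt0 : 0 < m * K * E by rewrite !mulr_gt0.
rewrite (_ : a / _ - _ = (a - m * K * l) / (m * K * E)); last by field; lra.
rewrite ltr_pdivlMr //.
have eps_gt0 : 0 < eps * K by lra.
have : eps * K <= eps * K * E by rewrite ler_peMr // ltW.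
have := ler_wpM2l (ltW m_gt0) (ltW c_lt); nra.
Qed.
End RealBounds.

Section ComplexModulus.
Context {R : realType}.
Implicit Types x y : R[i].

Lemma cabs_ge0 x : 0 <= cabs x.
Proof. by case: x => a b; rewrite /cabs sqrtr_ge0. Qed.
Lemma cabsM x y : cabs (x * y) = cabs x * cabs y.
Proof. exact: ComplexField.Normc.normcM. Qed.
Lemma cabsD x y : cabs (x + y) <= cabs x + cabs y.
Proof. exact: le_normcD. Qed.
Lemma cabs0 : cabs (0 : R[i]) = 0.
Proof. exact: ComplexField.Normc.normc0. Qed.
Lemma cabs1 : cabs (1 : R[i]) = 1.
Proof. exact: ComplexField.Normc.normc1. Qed.
Lemma cabsX x k : cabs (x ^+ k) = cabs x ^+ k.
Proof. by elim: k => [|k IHk]; rewrite ?cabs1 // !exprS cabsM IHk. Qed.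
Lemma cabs_nat k : cabs (k%:R : R[i]) = k%:R.
Proof. by rewrite /cabs -[k%:R]/((1 : R[i]) *+ k) normcMn -/(cabs 1) cabs1. Qed.
Lemma cabs_gt0 {x} : x != 0 -> 0 < cabs x.
Proof.
move=> nz_x; rewrite lt0r cabs_ge0 andbT.
by apply: contra_neq nz_x => /ComplexField.Normc.eq0_normc.
Qed.
Lemma cabs_subl x y : cabs x - cabs y <= cabs (x - y).
Proof. by have := cabsD (x - y) y; rewrite subrK; lra. Qed.
Lemma cabs_subr x y : cabs y - cabs x <= cabs (x - y).
Proof. by have := cabs_subl y x; rewrite -[x - y]opprB /cabs normcN. Qed.
Lemma cabs_sum (I : Type) (r : seq I) (F : I -> R[i]) :
  cabs (\sum_(i <- r) F i) <= \sum_(i <- r) cabs (F i).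
Proof.
elim: r => [|x r IHr]; first by rewrite !big_nil cabs0.
by rewrite !big_cons; apply: le_trans (cabsD _ _) _; lra.
Qed.
End ComplexModulus.

Section FmapGrowth.
Context {R : realType}.
Implicit Types s z w : R[i].

(* [(z', w') = F_{1,s}(z, w) / s^2]. *)
Lemma Fmap_norm_growth s z w z' w' : s != 0 -> cabs s <= 1 / 8 ->
  s ^+ 2 * z' = (w ^+ 2 - s * z ^+ 2) ^+ 2 ->
  s ^+ 2 * w' = 4%:R * s * z * w * (w - z) * (w - s * z) ->
  pnorm z w ^+ 4 / 4 <= pnorm z' w'.
Proof.
move=> nz_s s_small def_z' def_w'.
have S_gt0 := cabs_gt0 nz_s; have S2_gt0 := exprn_gt0 2 S_gt0.
have z'E : cabs z' * cabs s ^+ 2 = cabs (w ^+ 2 - s * z ^+ 2) ^+ 2.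
  by rewrite mulrC -cabsX -cabsM def_z' cabsX.
have w'E : cabs w' * cabs s ^+ 2 =
    4 * cabs s * cabs z * cabs w * cabs (w - z) * cabs (w - s * z).
  by rewrite mulrC -cabsX -cabsM def_w' !cabsM cabs_nat.
have al_lo := cabs_subl (w ^+ 2) (s * z ^+ 2); rewrite cabsM !cabsX in al_lo.
have al_lo' := cabs_subr (w ^+ 2) (s * z ^+ 2); rewrite cabsM !cabsX in al_lo'.
rewrite /pnorm; have [zw|wz] := lerP (cabs z) (cabs w).
  rewrite le_max -(ler_pM2r S2_gt0) z'E.
  by apply/orP; left; apply: growth_first_dominant S_gt0 s_small _ al_lo; rewrite cabs_ge0.
rewrite le_max; apply/orP.
have [al_large|al_small] := lerP (cabs s * cabs z ^+ 2 / 2) (cabs (w ^+ 2 - s * z ^+ 2)).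
  by left; rewrite -(ler_pM2r S2_gt0) z'E; exact: growth_first_large (ltW S_gt0) al_large.
right; rewrite -(ler_pM2r S2_gt0) w'E.
apply: growth_second S_gt0 s_small _ _ al_lo al_lo' al_small _ _.
- exact: cabs_ge0.
- exact: cabs_ge0.
- exact: cabs_subr.
- by have := cabs_subl w (s * z); rewrite cabsM.
Qed.
End FmapGrowth.

Section EvalNearZero.
Context {R : realType}.
Implicit Types (P Q : bpoly R) (s : R[i]).

Lemma ev1_sub_ev10 P s : cabs s <= 1 ->
  cabs (ev 1 s P - ev 1 0 P) <= cabs s * \sum_(m <- msupp P) cabs P@_m.
Proof.
move=> s_le1; rewrite !evE -sumrB mulr_sumr.
apply: le_trans (cabs_sum _ _ _) _; apply: ler_sum => m _.
rewrite -mulrBr cabsM !expr1n !mul1r mulrC ler_wpM2r ?cabs_ge0 //.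
case: (m _) => [|k]; first by rewrite !expr0 subrr cabs0 cabs_ge0.
rewrite expr0n subr0 cabsX exprS ler_piMr ?cabs_ge0 //.
by rewrite exprn_ile1 ?cabs_ge0.
Qed.

Lemma ev1_near0 P : exists2 delta : R, 0 < delta &
  forall s, cabs s < delta -> cabs (ev 1 0 P) / 2 <= cabs (ev 1 s P).
Proof.
set V := cabs (ev 1 0 P); set C := \sum_(m <- msupp P) cabs P@_m.
have C_ge0 : 0 <= C by rewrite sumr_ge0 // => m _; rewrite cabs_ge0.
have [V_le0|V_gt0] := lerP V 0.
  by exists 1 => // s _; apply: le_trans (cabs_ge0 _); lra.
exists (Num.min 1 (V / (2 * (C + 1)))) => [|s].
  by rewrite lt_min ltr01 divr_gt0 //; lra.
rewrite lt_min => /andP[s_lt1 s_small].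
have := ev1_sub_ev10 P s (ltW s_lt1); have := cabs_subr (ev 1 s P) (ev 1 0 P).
have : cabs s * (2 * (C + 1)) < V by rewrite -ltr_pdivlMr //; lra.
have := cabs_ge0 s; rewrite -/V -/C; nra.
Qed.

Lemma ev1_Fmap P Q s :
  ev 1 s (Fmap (P, Q)).1 = (ev 1 s Q ^+ 2 - s * ev 1 s P ^+ 2) ^+ 2 /\
  ev 1 s (Fmap (P, Q)).2 =
    4%:R * s * ev 1 s P * ev 1 s Q * (ev 1 s Q - ev 1 s P) * (ev 1 s Q - s * ev 1 s P).
Proof.
by rewrite /Fmap /= !(evXn, evB, evM, ev_t1, ev_t2, ev_nat); split; ring.
Qed.
End EvalNearZero.

Section Recurrences.
Context {R : realType}.

Lemma pow_recurrence_gt0 {x : nat -> R} {k c} : 0 < c -> 0 < x 0%N ->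
  (forall j, x j ^+ k / c <= x j.+1) -> forall j, 0 < x j.
Proof.
move=> c_gt0 x0_gt0 x_rec; elim=> // j IHj.
by apply: lt_le_trans (x_rec j); rewrite divr_gt0 ?exprn_gt0.
Qed.

Lemma ln_pow_recurrence {x : nat -> R} {k c} : 0 < c -> 0 < x 0%N ->
  (forall j, x j ^+ k / c <= x j.+1) -> forall j, k%:R * ln (x j) - ln c <= ln (x j.+1).
Proof.
move=> c_gt0 x0_gt0 x_rec j; have x_gt0 := pow_recurrence_gt0 c_gt0 x0_gt0 x_rec.
have xk_gt0 : 0 < x j ^+ k by rewrite exprn_gt0.
have := x_rec j; rewrite -ler_ln ?posrE ?divr_gt0 //.
by rewrite ln_div ?posrE // lnXn // mulr_natl.
Qed.

End Recurrences.

Section Iteration.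
Context {R : realType}.
Context {Fs : nat -> bpoly R * bpoly R} {e : nat}.
Hypothesis Fs1_dhomog : (Fs 1).1 \is e.-homog /\ (Fs 1).2 \is e.-homog.
Hypothesis Fs_rec : forall n, (1 <= n)%N ->
  (Fmap (Fs n)).1 = t2 ^+ 2 * (Fs n.+1).1 /\ (Fmap (Fs n)).2 = t2 ^+ 2 * (Fs n.+1).2.

Lemma Fs_dhomog n :
  (Fs n.+1).1 \is (4 ^ n * e).-homog /\ (Fs n.+1).2 \is (4 ^ n * e).-homog.
Proof.
elim: n => [|n [h1 h2]]; first by rewrite mul1n.
have [r1 r2] := Fs_rec n.+1 isT.
have [f1 f2] := Fmap_dhomog h1 h2; rewrite -surjective_pairing r1 r2 in f1 f2.
by rewrite expnS -mulnA; split; apply: dhomog_t2sq_cancel.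
Qed.

Lemma Fs_ev10_step n :
  ev 1 0 (Fs n.+1).2 = 0 /\ ev 1 0 (Fs n.+2).1 = ev 1 0 (Fs n.+1).1 ^+ 4.
Proof.
have [r1 _] := Fs_rec n.+1 isT; have [_ h2] := Fs_dhomog n.
by rewrite [Fs n.+1]surjective_pairing in r1; exact: Fmap1_t2sq h2 r1.
Qed.

Lemma Fs2_ev10 n : ev 1 0 (Fs n.+1).2 = 0.
Proof. exact: (Fs_ev10_step n).1. Qed.

Lemma Fs1_ev10 n : ev 1 0 (Fs n.+1).1 = ev 1 0 (Fs 1).1 ^+ (4 ^ n).
Proof.
elim: n => [|n IHn]; first by rewrite expr1.
by rewrite (Fs_ev10_step n).2 IHn -exprM expnS mulnC.
Qed.

Hypothesis P1_ev10 : ev 1 0 (Fs 1).1 != 0.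

Lemma pdeg_Fs n : pdeg (Fs n.+1) = (4 ^ n * e)%N.
Proof.
have [h1 h2] := Fs_dhomog n.
have nz : (Fs n.+1).1 != 0.
  apply: contra_neq (expf_neq0 (4 ^ n) P1_ev10) => P0.
  by rewrite -Fs1_ev10 P0 /ev meval0.
by rewrite [Fs _]surjective_pairing (pdeg_dhomog h1 h2).
Qed.

Local Notation p0 := (ev 1 0 (Fs 1).1).
Local Notation nF n t := (pnorm (ev 1 t (Fs n).1) (ev 1 t (Fs n).2)).

Lemma pnorm_Fs_step n t : cabs t <= 1 / 8 -> nF n.+1 t ^+ 4 / 4 <= nF n.+2 t.
Proof.
move=> t_small; have [t0|nz_t] := eqVneq t 0.
  have pnorm_Fs m : nF m.+1 0 = cabs p0 ^+ (4 ^ m).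
    by rewrite Fs2_ev10 // Fs1_ev10 // /pnorm cabs0 cabsX max_l ?exprn_ge0 ?cabs_ge0.
  rewrite t0 !pnorm_Fs expnS mulnC exprM.
  by have := exprn_ge0 4 (exprn_ge0 (4 ^ n) (cabs_ge0 p0)); lra.
have [r1 r2] := Fs_rec n.+1 isT.
move: r1 r2; case: (Fs n.+1) => P Q /= r1 r2.
have [f1 f2] := ev1_Fmap P Q t.
apply: Fmap_norm_growth nz_t t_small _ _.
  by have := congr1 (ev 1 t) r1; rewrite f1 evM evXn ev_t2 => ->.
by have := congr1 (ev 1 t) r2; rewrite f2 evM evXn ev_t2 => ->.
Qed.

Lemma Fs_norm_near0 M : exists2 delta : R, 0 < delta &
  forall t, cabs t < delta -> cabs p0 ^+ (4 ^ M) / 2 <= nF M.+1 t.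
Proof.
have [delta delta_gt0 near0] := ev1_near0 (Fs M.+1).1.
exists delta => // t /near0; rewrite Fs1_ev10 // cabsX => /le_trans; apply.
by rewrite le_max lexx.
Qed.

(* Passing from [F_{M+1}(1, 0)] to [F_{M+1}(1, t)] costs [ln 2] and the [k]-th
   further step costs [ln 4], that is [ln 4 / 4^k] after normalisation by [4^k];
   hence the constant [ln 2 + ln 4 / 3]. *)
Lemma ln_norm_Fs_lower M t : cabs t <= 1 / 8 ->
  cabs p0 ^+ (4 ^ M) / 2 <= nF M.+1 t -> forall j,
  0 < nF (M.+1 + j) t /\
  4 ^+ j * (4 ^+ M * ln (cabs p0) - (ln 2 + ln 4 / 3)) <= ln (nF (M.+1 + j) t).
Proof.
move=> t_small x0_lo j; set x := fun j => nF (M.+1 + j) t.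
have x0_gt0 : 0 < x 0%N.
  by rewrite /x addn0; apply: lt_le_trans x0_lo; rewrite divr_gt0 ?exprn_gt0 ?cabs_gt0.
have x_rec i : x i ^+ 4 / 4 <= x i.+1 by rewrite /x addnS pnorm_Fs_step.
split; first exact: pow_recurrence_gt0 (ltr0Sn _ 3) x0_gt0 x_rec j.
have ln_rec := ln_pow_recurrence (ltr0Sn _ 3) x0_gt0 x_rec.
have p0_gt0 : 0 < cabs p0 by rewrite cabs_gt0.
have ln_x0 : 4 ^+ M * ln (cabs p0) - ln 2 <= ln (x 0%N).
  have V_gt0 : 0 < cabs p0 ^+ (4 ^ M) / 2 by rewrite divr_gt0 ?exprn_gt0.
  have := x0_lo; rewrite /x addn0 -ler_ln ?posrE //; last exact: lt_le_trans x0_lo.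
  by rewrite ln_div ?posrE ?exprn_gt0 // lnXn // -[_ *+ 4 ^ M]mulr_natl natrX.
have ln4_ge0 : 0 <= ln (4 : R) by rewrite ln_ge0 // ler1n.
have fix_c : 4 * (ln 4 / 3) - ln 4 = ln 4 / 3 :> R by field.
apply: le_trans (affine_recurrence_lower (ler0n _ 4) fix_c ln_rec j).
rewrite -[X in X <= _]addr0; apply: lerD; last by rewrite divr_ge0.
by apply: ler_wpM2l; [rewrite exprn_ge0 | lra].
Qed.

Lemma log_norm_Fs_lower (eps : R) : 0 < eps ->
  exists (delta : R) (N : nat), 0 < delta /\ (0 < N)%N /\
  forall (t : R[i]) (n : nat), cabs t < delta -> (N <= n)%N ->
    let nF := pnorm (ev 1 t (Fs n).1) (ev 1 t (Fs n).2) in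
    0 < nF /\ ln nF / (pdeg (Fs n))%:R - ln (cabs p0) / e%:R > - eps.
Proof.
move=> eps_gt0; set c : R := ln 2 + ln 4 / 3.
have c_ge0 : 0 <= c by rewrite addr_ge0 ?divr_ge0 ?ln_ge0 ?ler1n.
have [M c_lt] : exists M, c < eps * 4 ^+ M.
  have [M cM] : exists M, c / eps < M%:R.
    exists (Num.Def.archi_bound (c / eps)); apply: archi_boundP.
    by rewrite divr_ge0 // ltW.
  have M4 : M%:R <= 4 ^+ M :> R by rewrite -natrX ler_nat ltnW // ltn_expl.
  by exists M; rewrite mulrC -ltr_pdivrMr //; exact: lt_le_trans cM M4.
have [delta delta_gt0 near0] := Fs_norm_near0 M.
exists (Num.min delta (1 / 8)), M.+1; split; first by rewrite lt_min delta_gt0 /=; lra.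
split=> // t n; rewrite lt_min => /andP[t_delta t_small] Nn nFn; rewrite {}/nFn.
have [j ->] : exists j, n = (M.+1 + j)%N by exists (n - M.+1)%N; rewrite subnKC.
have [nF_gt0 ln_lo] := ln_norm_Fs_lower M t (ltW t_small) (near0 t t_delta) j.
split => //; rewrite addSn pdeg_Fs -addSn.
have [->|e_gt0] := posnP e; first by rewrite muln0 !invr0 !mulr0 subrr oppr_lt0.
rewrite natrM natrX exprD [4 ^+ M * _]mulrC.
apply: normalized_lower_bound (exprn_gt0 _ _) (exprn_gt0 _ _) _ c_ge0 c_lt ln_lo => //.
by rewrite ler1n.
Qed.
End Iteration.

Theorem lemma4p5 (R : realType) (k : nat) (c1 c2 : bpoly R)
  (g P1 Q1 : bpoly R) (Fs : nat -> bpoly R * bpoly R) :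
  c1 \is k.-homog -> c2 \is k.-homog -> bcoprime c1 c2 ->
  c2 != 0 -> c1 != 0 -> c1 != c2 -> t2 * c1 != t1 * c2 ->
  is_gcd g (Fmap (c1, c2)).1 (Fmap (c1, c2)).2 ->
  (Fmap (c1, c2)).1 = g * P1 -> (Fmap (c1, c2)).2 = g * Q1 ->
  Fs 1%N = (P1, Q1) ->
  (forall n, (1 <= n)%N ->
     (Fmap (Fs n)).1 = t2 ^+ 2 * (Fs n.+1).1 /\
     (Fmap (Fs n)).2 = t2 ^+ 2 * (Fs n.+1).2) ->
  let d := pdeg (P1, Q1) in
  exists eps0 : R, 0 < eps0 /\
  forall eps : R, 0 < eps -> eps < eps0 ->
  exists (delta : R) (N : nat), 0 < delta /\ (0 < N)%N /\
  forall (t : R[i]) (n : nat), cabs t < delta -> (N <= n)%N ->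
    let nF := pnorm (ev 1 t (Fs n).1) (ev 1 t (Fs n).2) in
    0 < nF /\
    ln nF / (pdeg (Fs n))%:R - ln (cabs (ev 1 0 P1)) / d%:R > - eps.
Proof.
move=> hc1 hc2 _ nz_c2 nz_c1 c12 tc12 gcd_g def_A def_B Fs1 Fs_rec d.
have [hA hB] := Fmap_dhomog hc1 hc2.
have nz_B := Fmap2_neq0 nz_c1 nz_c2 c12 tc12.
have [e [hP1 hQ1]] := dhomog_cofactors hA hB nz_B def_A def_B.
have Fs1_dhomog : (Fs 1).1 \is e.-homog /\ (Fs 1).2 \is e.-homog by rewrite Fs1.
have nz_g : g != 0 by apply: contraNneq nz_B => g0; rewrite def_B g0 mul0r.
have P1_ev10 : ev 1 0 (Fs 1).1 != 0.
  rewrite Fs1 /=; rewrite def_A def_B in gcd_g.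
  apply: gcd_cofactor_ev10 nz_g gcd_g hP1 hQ1 _.
  by have := Fs2_ev10 Fs1_dhomog Fs_rec 0; rewrite Fs1.
have d_e : d = e.
  by apply: pdeg_dhomog hP1 hQ1 _; apply: contraNneq P1_ev10 => P0; rewrite Fs1 P0 /ev meval0.
exists 1; split => // eps eps_gt0 _; rewrite d_e.
by have := log_norm_Fs_lower Fs1_dhomog Fs_rec P1_ev10 eps eps_gt0; rewrite Fs1.
Qed.
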